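(* (i) For every $k\ge2$, $\alpha\in(0,1)\cup(1,2)$ and $p\in(0,1)$ there exists $C_{1,k}^{\alpha,p}>0$ such that for all $n\in\mathbb{N}$ and $t\in\mathbb{R}$, $|R^{\alpha,p}_{n,1,k}(t)|\le C^{\alpha,p}_{1,k}|t|^k/n^{(k-\alpha)/\alpha}$. (ii) For every $\alpha\in(0,1)\cup(1,2)$ and $p\in(0,1)$ there exist $C_2^{\alpha,p}>0$ and $C_3^{\alpha,p}>0$ such that for all $n\in\mathbb{N}$ and $|t|\le C_2^{\alpha,p}n^{1/\alpha}$: $|x_n^{\alpha,p}(t)|/n\le\frac12$, and $|x_n^{\alpha,p}(t)|\le C_3^{\alpha,p}|t|^\alpha$ if $0<\alpha<1$, while $|x_n^{\alpha,p}(t)|\le C_3^{\alpha,p}|t|\,n^{(\alpha-1)/\alpha}$ if $1<\alpha<2$.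
   Context: Let $p\in(0,1)$, $q=1-p$, $r=1/q$, $\alpha>0$, and $\mathbf{f}_{\alpha,p}(t)=\sum_{k\ge1}e^{\mathrm{i}tr^{k/\alpha}}q^{k-1}p$ (the characteristic function of $X$ with $\mathsf{P}\{X=r^{k/\alpha}\}=q^{k-1}p$). Define $x_n^{\alpha,p}(t)=n(\mathbf{f}_{\alpha,p}(t/n^{1/\alpha})-1)$. Let $\gamma_n=n/r^{\lceil\log_r n\rceil}\in(q,1]$ and, for $k\ge2$, \[R^{\alpha,p}_{n,1,k}(t)=-\sum_{m=\lceil\log_rn\rceil}^\infty\Big(\exp\Big\{\frac{\mathrm{i}t}{r^{m/\alpha}\gamma_n^{1/\alpha}}\Big\}-\sum_{j=0}^{k-1}\frac{(\mathrm{i}t)^j}{j!\,r^{jm/\alpha}\gamma_n^{j/\alpha}}\Big)\frac{p\gamma_n}{q}r^m,\quad t\in\mathbb{R}.\] *)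

From Stdlib Require Import Reals ZArith.
From Coquelicot Require Import Coquelicot.
Open Scope R_scope.

Definition cis (th : R) : C := (cos th, sin th).

Definition CSeries (a : nat -> C) : C :=
  (Series (fun m => fst (a m)), Series (fun m => snd (a m))).

Definition Rceil (x : R) : Z := (1 - up (- x))%Z.

(* |x|^a for x >= 0 with 0^a = 0 (a > 0) *)
Definition rpow (x a : R) : R := if Req_EM_T x 0 then 0 else Rpower x a.

Definition qq (p : R) : R := 1 - p.
Definition rr (p : R) : R := / qq p.

Definition f_ap (alpha p t : R) : C :=
  CSeries (fun j => let k := S j in
    Cmult (cis (t * Rpower (rr p) (INR k / alpha))) (RtoC (qq p ^ (k - 1) * p))).

Definition x_n (alpha p : R) (n : nat) (t : R) : C :=
  Cmult (RtoC (INR n)) (Cminus (f_ap alpha p (t / Rpower (INR n) (1 / alpha))) (RtoC 1)).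

Definition mlog (p : R) (n : nat) : nat := Z.to_nat (Rceil (ln (INR n) / ln (rr p))).

Definition gamma_n (p : R) (n : nat) : R := INR n / (rr p ^ mlog p n).

Definition R_n1k (alpha p : R) (n k : nat) (t : R) : C :=
  let r := rr p in let g := gamma_n p n in
  Copp (CSeries (fun j => let m := (mlog p n + j)%nat in
    Cmult
      (Cminus (cis (t / (Rpower r (INR m / alpha) * Rpower g (1 / alpha))))
         (sum_n (fun i => Cmult (pow_n Ci i)
             (RtoC (t ^ i / (INR (fact i) * Rpower r (INR i * INR m / alpha)
                                * Rpower g (INR i / alpha))))) (k - 1)))
      (RtoC (p * g / qq p * r ^ m)))).

(* Both estimates come from the two elementary bounds
   |e^(iy) - sum_(i<k) (iy)^i/i!| <= 2|y|^k  (mean value theorem on the real and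
   imaginary parts, by induction on k)  and  |e^(iy) - 1| <= 2 min(1, |y|).

   (i) Writing n = gamma_n r^M, the m-th term of R_(n,1,k) is a Taylor remainder at
   y = t / (n r^j)^(1/alpha) (j = m - M) times (p/q) n r^j, hence is at most
   2 (p/q) |t|^k n^(1 - k/alpha) rho^j with rho = r^(1 - k/alpha) < 1 since k > alpha.

   (ii) f(s) - 1 = sum_j (e^(i s r^((j+1)/alpha)) - 1) q^j p, so
   |f(s) - 1| <= 4 sum_j min(1, |s| r^((j+1)/alpha)) q^j p.  For alpha > 1 the bound
   |s| r^((j+1)/alpha) alone gives a geometric series of ratio r^(1/alpha) q < 1, so
   |f(s) - 1| = O(|s|).  For alpha < 1 that ratio exceeds 1; splitting the sum at the
   index K where |s| r^((j+1)/alpha) crosses 1, the head is dominated by its last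
   term and the tail sums to q^(K+1); both are O(|s|^alpha).  Substituting s = t / n^(1/alpha) in
   x_n(t) = n (f(s) - 1) gives the claims, and |t| <= C_2 n^(1/alpha) makes
   |f(s) - 1| <= 1/2. *)

From Stdlib Require Import Reals ZArith Lra Lia.
From Coquelicot Require Import Coquelicot.
Open Scope R_scope.

Definition cis_monomial (k : nat) (x : R) : C :=
  Cmult (pow_n Ci k) (RtoC (x ^ k / INR (fact k))).

Fixpoint cis_taylor (k : nat) (x : R) : C :=
  match k with
  | O => RtoC 0
  | S k => Cplus (cis_taylor k x) (cis_monomial k x)
  end.

Lemma is_derive_pow_fact (k : nat) (x : R) :
  is_derive (fun y => y ^ S k / INR (fact (S k))) x (x ^ k / INR (fact k)).
Proof.
  assert (INR (fact k) <> 0) by apply INR_fact_neq_0.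
  assert (INR (S k) <> 0) by (apply not_0_INR; lia).
  apply is_derive_ext with (fun y => / INR (fact (S k)) * y ^ S k).
  { intro y; apply Rmult_comm. }
  replace (x ^ k / INR (fact k)) with (/ INR (fact (S k)) * (INR (S k) * 1 * x ^ pred (S k))).
  2:{ rewrite fact_simpl, mult_INR; simpl pred; field; auto. }
  apply is_derive_scal, is_derive_pow; apply (is_derive_id (K := R_AbsRing)).
Qed.

Lemma cis_monomial_re (k : nat) (x : R) :
  fst (cis_monomial k x) = fst (pow_n Ci k) * (x ^ k / INR (fact k)).
Proof. unfold cis_monomial; destruct (pow_n Ci k); simpl; ring. Qed.

Lemma cis_monomial_im (k : nat) (x : R) :
  snd (cis_monomial k x) = snd (pow_n Ci k) * (x ^ k / INR (fact k)).
Proof. unfold cis_monomial; destruct (pow_n Ci k); simpl; ring. Qed.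

Lemma cis_monomial_derive (k : nat) (x : R) :
  is_derive (fun y => fst (cis_monomial (S k) y)) x (- snd (cis_monomial k x)) /\
  is_derive (fun y => snd (cis_monomial (S k) y)) x (fst (cis_monomial k x)).
Proof.
  assert (Hre : fst (pow_n Ci (S k)) = - snd (pow_n Ci k))
    by (simpl; destruct (pow_n Ci k); simpl; ring).
  assert (Him : snd (pow_n Ci (S k)) = fst (pow_n Ci k))
    by (simpl; destruct (pow_n Ci k); simpl; ring).
  split.
  - apply is_derive_ext with (fun y => - snd (pow_n Ci k) * (y ^ S k / INR (fact (S k)))).
    { intro y; rewrite cis_monomial_re, Hre; reflexivity. }
    rewrite cis_monomial_im, Ropp_mult_distr_l.
    apply is_derive_scal, is_derive_pow_fact.
  - apply is_derive_ext with (fun y => fst (pow_n Ci k) * (y ^ S k / INR (fact (S k)))).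
    { intro y; rewrite cis_monomial_im, Him; reflexivity. }
    rewrite cis_monomial_re.
    apply is_derive_scal, is_derive_pow_fact.
Qed.

Lemma cis_taylor_derive (k : nat) (x : R) :
  is_derive (fun y => fst (cis_taylor (S k) y)) x (- snd (cis_taylor k x)) /\
  is_derive (fun y => snd (cis_taylor (S k) y)) x (fst (cis_taylor k x)).
Proof.
  induction k as [|k [IHre IHim]].
  - split; [apply is_derive_ext with (fun _ : R => 1) | apply is_derive_ext with (fun _ : R => 0)];
      try (intro y; simpl; field); simpl; rewrite ?Ropp_0; auto_derive; auto.
  - destruct (cis_monomial_derive k x) as [Dre Dim].
    split.
    + replace (- snd (cis_taylor (S k) x))
        with (- snd (cis_taylor k x) + - snd (cis_monomial k x)) by (simpl; ring).
      exact (is_derive_plus _ _ _ _ _ IHre Dre).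
    + replace (fst (cis_taylor (S k) x))
        with (fst (cis_taylor k x) + fst (cis_monomial k x)) by (simpl; ring).
      exact (is_derive_plus _ _ _ _ _ IHim Dim).
Qed.

Lemma cis_taylor_S_0 (k : nat) : cis_taylor (S k) 0 = RtoC 1.
Proof.
  induction k as [|k IH].
  - apply injective_projections; simpl; field.
  - change (cis_taylor (S (S k)) 0) with (Cplus (cis_taylor (S k) 0) (cis_monomial (S k) 0)).
    rewrite IH; apply injective_projections; simpl fst; simpl snd;
      rewrite ?cis_monomial_re, ?cis_monomial_im; simpl pow; rewrite !Rmult_0_l; unfold Rdiv; ring.
Qed.

Lemma Rabs_le_pow_of_derive (h h' : R -> R) (k : nat) :
  h 0 = 0 -> (forall c, is_derive h c (h' c)) -> (forall c, Rabs (h' c) <= Rabs c ^ k) ->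
  forall x, Rabs (h x) <= Rabs x ^ S k.
Proof.
  intros h0 Hd Hb x.
  destruct (MVT_gen h 0 x h') as [c [Hc Hmvt]].
  - intros; apply Hd.
  - intros y _; apply continuity_pt_filterlim.
    apply (ex_derive_continuous (K := R_AbsRing) (V := R_NormedModule)).
    exists (h' y); apply Hd.
  - rewrite h0, !Rminus_0_r in Hmvt; rewrite Hmvt, Rabs_mult; simpl.
    rewrite Rmult_comm; apply Rmult_le_compat_l; [apply Rabs_pos|].
    apply Rle_trans with (1 := Hb c), pow_incr; split; [apply Rabs_pos|].
    unfold Rmin, Rmax in Hc; destruct (Rle_dec 0 x); unfold Rabs;
      repeat destruct Rcase_abs; lra.
Qed.

Lemma cis_taylor_rem_re_im (k : nat) (x : R) :
  Rabs (fst (Cminus (cis x) (cis_taylor k x))) <= Rabs x ^ k /\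
  Rabs (snd (Cminus (cis x) (cis_taylor k x))) <= Rabs x ^ k.
Proof.
  revert x; induction k as [|k IH]; intro x.
  - simpl; rewrite Ropp_0, !Rplus_0_r.
    split; apply Rabs_le; generalize (COS_bound x) (SIN_bound x); lra.
  - simpl fst; simpl snd.
    split.
    + apply (Rabs_le_pow_of_derive (fun y => cos y - fst (cis_taylor (S k) y))
               (fun y => - snd (Cminus (cis y) (cis_taylor k y)))).
      * rewrite cis_taylor_S_0, cos_0; simpl; ring.
      * intro c; replace (- snd (Cminus (cis c) (cis_taylor k c)))
          with (- sin c - - snd (cis_taylor k c)) by (simpl; ring).
        apply (is_derive_minus cos); [apply is_derive_cos | apply cis_taylor_derive].
      * intro c; rewrite Rabs_Ropp; apply IH.
    + apply (Rabs_le_pow_of_derive (fun y => sin y - snd (cis_taylor (S k) y))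
               (fun y => fst (Cminus (cis y) (cis_taylor k y)))).
      * rewrite cis_taylor_S_0, sin_0; simpl; ring.
      * intro c; replace (fst (Cminus (cis c) (cis_taylor k c)))
          with (cos c - fst (cis_taylor k c)) by (simpl; ring).
        apply (is_derive_minus sin); [apply is_derive_sin | apply cis_taylor_derive].
      * intro c; apply IH.
Qed.

Lemma Cmod_le_re_im (z : C) (M : R) :
  Rabs (fst z) <= M -> Rabs (snd z) <= M -> Cmod z <= 2 * M.
Proof.
  intros Hre Him.
  apply Rle_trans with (1 := Cmod_2Rmax z).
  assert (sqrt 2 <= 2).
  { rewrite <- (sqrt_square 2) at 2 by lra; apply sqrt_le_1_alt; lra. }
  assert (Rmax (Rabs (fst z)) (Rabs (snd z)) <= M) by (apply Rmax_lub; auto).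
  assert (0 <= Rmax (Rabs (fst z)) (Rabs (snd z))) by
    (apply Rle_trans with (2 := Rmax_l _ _); apply Rabs_pos).
  apply Rmult_le_compat; auto using sqrt_pos.
Qed.

Lemma cis_taylor_rem_bound (k : nat) (x : R) :
  Cmod (Cminus (cis x) (cis_taylor k x)) <= 2 * Rabs x ^ k.
Proof. destruct (cis_taylor_rem_re_im k x); apply Cmod_le_re_im; auto. Qed.

Lemma Rabs_Series_le (c b : nat -> R) :
  (forall j, Rabs (c j) <= b j) -> ex_series b -> Rabs (Series c) <= Series b.
Proof.
  intros Hcb Hb.
  assert (Hc : ex_series (fun j => Rabs (c j))).
  { apply (ex_series_le (K := R_AbsRing) (V := R_CompleteNormedModule)) with b; auto.
    intro j; change (Rabs (Rabs (c j)) <= b j); rewrite Rabs_Rabsolu; auto. }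
  apply Rle_trans with (1 := Series_Rabs _ Hc), Series_le; auto.
  intro j; split; [apply Rabs_pos | auto].
Qed.

Lemma Cmod_CSeries_le (a : nat -> C) (b : nat -> R) :
  (forall j, Cmod (a j) <= b j) -> ex_series b -> Cmod (CSeries a) <= 2 * Series b.
Proof.
  intros Hab Hb.
  assert (Hre_im : forall j, Rabs (fst (a j)) <= b j /\ Rabs (snd (a j)) <= b j).
  { intro j; pose proof (Rmax_Cmod (a j)); pose proof (Hab j).
    pose proof (Rmax_l (Rabs (fst (a j))) (Rabs (snd (a j)))).
    pose proof (Rmax_r (Rabs (fst (a j))) (Rabs (snd (a j)))); split; lra. }
  apply Cmod_le_re_im; simpl; apply Rabs_Series_le; auto; intro j; apply Hre_im.
Qed.

Lemma ex_series_geom_scal (c q : R) : 0 <= q < 1 -> ex_series (fun j => q ^ j * c).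
Proof.
  intro Hq.
  apply (ex_series_ext (K := R_AbsRing) (V := R_NormedModule) (fun j => c * q ^ j)).
  { intro; simpl; ring. }
  apply (ex_series_scal_l (K := R_AbsRing) (V := R_NormedModule)), ex_series_geom.
  rewrite Rabs_pos_eq; lra.
Qed.

Lemma Series_geom_scal (c q : R) : 0 <= q < 1 -> Series (fun j => q ^ j * c) = c / (1 - q).
Proof.
  intro Hq; rewrite (Series_ext _ (fun j => c * q ^ j)) by (intro; ring).
  rewrite Series_scal_l, Series_geom by (rewrite Rabs_pos_eq; lra); reflexivity.
Qed.

Lemma Rpower_mult_INR (x y : R) (i : nat) : 0 < x -> Rpower x (INR i * y) = Rpower x y ^ i.
Proof.
  intro Hx; rewrite <- Rpower_pow by apply exp_pos.
  rewrite Rpower_mult, Rmult_comm; reflexivity.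
Qed.

Lemma Rpower_pow_l (x y : R) (i : nat) : 0 < x -> Rpower (x ^ i) y = Rpower x y ^ i.
Proof.
  intro Hx; rewrite <- Rpower_pow, Rpower_mult by exact Hx.
  apply Rpower_mult_INR, Hx.
Qed.

Lemma Rpower_div_pow (x c : R) (k : nat) :
  0 < x -> x / Rpower x c ^ k = Rpower x (1 - INR k * c).
Proof.
  intro Hx; rewrite <- Rpower_mult_INR by exact Hx.
  unfold Rminus; rewrite Rpower_plus, Rpower_Ropp, Rpower_1 by exact Hx; reflexivity.
Qed.

Lemma qq_bounds (p : R) : 0 < p < 1 -> 0 < qq p < 1.
Proof. unfold qq; lra. Qed.

Lemma rr_gt_1 (p : R) : 0 < p < 1 -> 1 < rr p.
Proof.
  intro Hp; unfold rr, qq; rewrite <- Rinv_1; apply Rinv_lt_contravar; lra.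
Qed.

Lemma sum_cis_monomial (k : nat) (y : R) :
  sum_n (fun i => cis_monomial i y) k = cis_taylor (S k) y.
Proof.
  induction k as [|k IH].
  - rewrite sum_O; apply injective_projections; simpl; ring.
  - rewrite sum_Sn, IH; reflexivity.
Qed.

Section RemainderTerm.

Variables (alpha p t : R) (n k : nat).
Hypotheses (Hp : 0 < p < 1) (Hn : (1 <= n)%nat).

Let r := rr p.
Let g := gamma_n p n.
Let M := mlog p n.

Definition remainder_term (j : nat) : C :=
  let m := (M + j)%nat in
  Cmult
    (Cminus (cis (t / (Rpower r (INR m / alpha) * Rpower g (1 / alpha))))
       (sum_n (fun i => Cmult (pow_n Ci i)
           (RtoC (t ^ i / (INR (fact i) * Rpower r (INR i * INR m / alpha)
                              * Rpower g (INR i / alpha))))) (k - 1)))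
    (RtoC (p * g / qq p * r ^ m)).

Lemma R_n1k_remainder_term : R_n1k alpha p n k t = Copp (CSeries remainder_term).
Proof. reflexivity. Qed.

Lemma r_gt_0 : 0 < r.
Proof. generalize (rr_gt_1 p Hp); unfold r; lra. Qed.

Lemma g_gt_0 : 0 < g.
Proof.
  apply Rdiv_lt_0_compat; [apply lt_0_INR; lia | apply pow_lt, r_gt_0].
Qed.

Lemma g_r_pow (j : nat) : g * r ^ (M + j) = INR n * r ^ j.
Proof.
  unfold g, gamma_n; fold r M; rewrite pow_add.
  field; apply pow_nonzero; generalize r_gt_0; lra.
Qed.

Lemma remainder_scale (m : nat) :
  Rpower r (INR m / alpha) * Rpower g (1 / alpha) = Rpower (g * r ^ m) (1 / alpha).
Proof.
  rewrite <- Rpower_mult_distr by (apply g_gt_0 || apply pow_lt, r_gt_0).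
  rewrite Rmult_comm, Rpower_pow_l by apply r_gt_0.
  rewrite <- Rpower_mult_INR by apply r_gt_0.
  f_equal; f_equal; unfold Rdiv; ring.
Qed.

Lemma remainder_term_taylor (j : nat) : (1 <= k)%nat ->
  remainder_term j =
  Cmult (Cminus (cis (t / Rpower (g * r ^ (M + j)) (1 / alpha)))
                (cis_taylor k (t / Rpower (g * r ^ (M + j)) (1 / alpha))))
        (RtoC (p * g / qq p * r ^ (M + j))).
Proof.
  intro Hk; unfold remainder_term; rewrite remainder_scale.
  set (y := t / Rpower (g * r ^ (M + j)) (1 / alpha)).
  replace (cis_taylor k y) with (sum_n (fun i => cis_monomial i y) (k - 1))
    by (rewrite sum_cis_monomial; f_equal; lia).
  do 2 f_equal; apply sum_n_ext; intro i; unfold cis_monomial; do 2 f_equal.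
  replace (INR i * INR (M + j) / alpha) with (INR i * (INR (M + j) / alpha)) by (unfold Rdiv; ring).
  replace (INR i / alpha) with (INR i * (1 / alpha)) by (unfold Rdiv; ring).
  rewrite !Rpower_mult_INR by (apply r_gt_0 || apply g_gt_0).
  rewrite Rmult_assoc, <- Rpow_mult_distr, remainder_scale.
  unfold y, Rdiv; rewrite Rpow_mult_distr, pow_inv.
  field; split; first [apply INR_fact_neq_0 | apply pow_nonzero, Rgt_not_eq, exp_pos].
Qed.

Lemma remainder_term_bound (j : nat) : (1 <= k)%nat ->
  Cmod (remainder_term j) <=
  2 * (p / qq p) * Rabs t ^ k * Rpower (INR n) (1 - INR k / alpha)
  * Rpower r (1 - INR k / alpha) ^ j.
Proof.
  intro Hk; rewrite remainder_term_taylor by exact Hk.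
  assert (Hq := qq_bounds p Hp).
  assert (Hr := r_gt_0).
  assert (Hrj : 0 < r ^ j) by (apply pow_lt; lra).
  assert (HnR : 0 < INR n) by (apply lt_0_INR; lia).
  set (X := g * r ^ (M + j)).
  assert (HX : 0 < X) by (apply Rmult_lt_0_compat; [apply g_gt_0 | apply pow_lt, r_gt_0]).
  assert (Hs : 0 < Rpower X (1 / alpha)) by apply exp_pos.
  assert (Hweight : 0 <= p * g / qq p * r ^ (M + j)).
  { left; apply Rmult_lt_0_compat; [|apply pow_lt, r_gt_0].
    apply Rdiv_lt_0_compat; [apply Rmult_lt_0_compat; [lra | apply g_gt_0] | lra]. }
  rewrite Cmod_mult, Cmod_R, (Rabs_pos_eq _ Hweight).
  apply Rle_trans with (1 := Rmult_le_compat_r _ _ _ Hweight (cis_taylor_rem_bound _ _)).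
  right.
  assert (Hexp : Rpower (INR n) (1 - INR k / alpha) * Rpower r (1 - INR k / alpha) ^ j
                 = X / Rpower X (1 / alpha) ^ k).
  { rewrite <- Rpower_pow_l, Rpower_mult_distr, <- g_r_pow, Rpower_div_pow by (exact HX || lra).
    f_equal; unfold Rdiv; ring. }
  rewrite (Rmult_assoc _ (Rpower (INR n) _)), Hexp.
  unfold Rdiv; rewrite Rabs_mult, Rabs_inv, (Rabs_pos_eq (Rpower _ _)) by lra.
  rewrite Rpow_mult_distr, pow_inv.
  unfold X; field; split; [apply pow_nonzero, Rgt_not_eq, exp_pos | lra].
Qed.

End RemainderTerm.

Lemma R_n1k_bound (k : nat) (alpha p : R) :
  0 < alpha < INR k -> 0 < p < 1 ->
  exists C1 : R, 0 < C1 /\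
    forall (n : nat) (t : R), (1 <= n)%nat ->
      Cmod (R_n1k alpha p n k t) <= C1 * Rabs t ^ k / Rpower (INR n) ((INR k - alpha) / alpha).
Proof.
  intros Halpha Hp.
  assert (Hk : (1 <= k)%nat) by (destruct k; [simpl in Halpha; lra | lia]).
  assert (Hq := qq_bounds p Hp).
  set (rho := Rpower (rr p) (1 - INR k / alpha)).
  assert (Hrho : 0 <= rho < 1).
  { split; [left; apply exp_pos|].
    rewrite <- (Rpower_O (rr p)) by (generalize (rr_gt_1 p Hp); lra).
    apply Rpower_lt; [apply rr_gt_1, Hp|].
    assert (1 < INR k / alpha) by (apply Rlt_div_r; lra). lra. }
  exists (4 * (p / qq p) / (1 - rho)); split.
  { apply Rdiv_lt_0_compat; [apply Rmult_lt_0_compat, Rdiv_lt_0_compat|]; lra. }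
  intros n t Hn.
  set (c := 2 * (p / qq p) * Rabs t ^ k * Rpower (INR n) (1 - INR k / alpha)).
  rewrite R_n1k_remainder_term, Cmod_opp.
  apply Rle_trans with (2 * Series (fun j => rho ^ j * c)).
  - apply Cmod_CSeries_le; [|apply ex_series_geom_scal, Hrho].
    intro j; rewrite Rmult_comm; apply remainder_term_bound; (lra || assumption).
  - rewrite Series_geom_scal by exact Hrho.
    unfold c; replace (1 - INR k / alpha) with (- ((INR k - alpha) / alpha)) by (field; lra).
    rewrite Rpower_Ropp; right; field.
    repeat split; try lra; apply Rgt_not_eq, exp_pos.
Qed.

Lemma exp_le_compat (x y : R) : x <= y -> exp x <= exp y.
Proof. intros [Hlt | ->]; [left; apply exp_increasing, Hlt | right; reflexivity]. Qed.

Lemma exp_pow (x : R) (n : nat) : exp x ^ n = exp (INR n * x).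
Proof. rewrite <- Rpower_pow by apply exp_pos; unfold Rpower; rewrite ln_exp; reflexivity. Qed.

Lemma rpow_exp (u a : R) : 0 < u -> rpow u a = exp (a * ln u).
Proof. intro Hu; unfold rpow; destruct (Req_EM_T u 0); [lra | reflexivity]. Qed.

Lemma exists_split_index (d X : R) :
  0 < d -> d <= X -> exists K : nat, (INR K + 1) * d <= X < (INR K + 2) * d.
Proof.
  intros Hd HX.
  assert (H1 : 1 <= X / d) by (apply Rle_div_r; lra).
  destruct (nfloor_ex (X / d - 1)) as [K HK]; [lra|].
  exists K; replace X with (X / d * d) by (field; lra).
  split; apply Rmult_le_compat_r || apply Rmult_lt_compat_r; lra.
Qed.

(* With [l = ln r], [exp (l / a) = r^(1/a)] and [exp (- l) = q]: the [j]-th term of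
   [f(s) - 1] has modulus at most [2 * dev_weight l a p |s| j]. *)
Definition dev_weight (l a p u : R) (j : nat) : R :=
  Rmin 1 (u * exp (l / a) ^ S j) * (exp (- l) ^ j * p).

Section DevWeight.

Variables (l a p u : R).
Hypotheses (Hl : 0 < l) (Hp : 0 <= p) (Hu : 0 <= u).

Lemma exp_neg_bounds : 0 < exp (- l) < 1.
Proof. split; [apply exp_pos | rewrite <- exp_0; apply exp_increasing; lra]. Qed.

Lemma exp_ratio_gt_1 : 0 < a < 1 -> 1 < exp (l / a) * exp (- l).
Proof.
  intro Ha; rewrite <- exp_plus, <- exp_0; apply exp_increasing.
  assert (l < l / a) by (apply Rlt_div_r; nra). lra.
Qed.

Lemma exp_ratio_lt_1 : 1 < a -> exp (l / a) * exp (- l) < 1.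
Proof.
  intro Ha; rewrite <- exp_plus, <- exp_0; apply exp_increasing.
  assert (l / a < l) by (apply Rlt_div_l; nra). lra.
Qed.

Lemma dev_weight_ge_0 (j : nat) : 0 <= dev_weight l a p u j.
Proof.
  assert (0 <= exp (- l) ^ j * p)
    by (apply Rmult_le_pos; [apply pow_le, Rlt_le, exp_pos | exact Hp]).
  assert (0 <= u * exp (l / a) ^ S j)
    by (apply Rmult_le_pos; [exact Hu | apply pow_le, Rlt_le, exp_pos]).
  apply Rmult_le_pos; [apply Rmin_glb; lra | assumption].
Qed.

Lemma dev_weight_le_geom (j : nat) : dev_weight l a p u j <= exp (- l) ^ j * p.
Proof.
  apply Rle_trans with (1 * (exp (- l) ^ j * p)); [|right; ring].
  apply Rmult_le_compat_r; [apply Rmult_le_pos; [apply pow_le, Rlt_le, exp_pos | exact Hp]|].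
  apply Rmin_l.
Qed.

Lemma dev_weight_le_lin (j : nat) :
  dev_weight l a p u j <= (exp (l / a) * exp (- l)) ^ j * (u * exp (l / a) * p).
Proof.
  replace ((exp (l / a) * exp (- l)) ^ j * (u * exp (l / a) * p))
    with (u * exp (l / a) ^ S j * (exp (- l) ^ j * p)) by (rewrite Rpow_mult_distr; simpl; ring).
  apply Rmult_le_compat_r; [apply Rmult_le_pos; [apply pow_le, Rlt_le, exp_pos | exact Hp]|].
  apply Rmin_r.
Qed.

Lemma ex_series_dev_weight : ex_series (dev_weight l a p u).
Proof.
  apply (ex_series_le (K := R_AbsRing) (V := R_CompleteNormedModule))
    with (fun j => exp (- l) ^ j * p).
  - intro j; change (Rabs (dev_weight l a p u j) <= exp (- l) ^ j * p).
    rewrite Rabs_pos_eq by apply dev_weight_ge_0; apply dev_weight_le_geom.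
  - apply ex_series_geom_scal; generalize exp_neg_bounds; lra.
Qed.

Lemma Series_dev_weight_le_lin :
  exp (l / a) * exp (- l) < 1 ->
  Series (dev_weight l a p u) <= exp (l / a) * p / (1 - exp (l / a) * exp (- l)) * u.
Proof.
  intro Hlam.
  assert (0 <= exp (l / a) * exp (- l)) by (apply Rmult_le_pos; apply Rlt_le, exp_pos).
  apply Rle_trans with (Series (fun j => (exp (l / a) * exp (- l)) ^ j * (u * exp (l / a) * p))).
  - apply Series_le; [|apply ex_series_geom_scal; lra].
    intro j; split; [apply dev_weight_ge_0 | apply dev_weight_le_lin].
  - rewrite Series_geom_scal by lra; right; field; lra.
Qed.

Lemma sum_dev_weight_head_le (K : nat) :
  0 < a < 1 -> 0 < u -> (INR K + 1) * (l / a) <= - ln u ->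
  sum_f_R0 (dev_weight l a p u) K
  <= exp (l / a) * p / (exp (l / a) * exp (- l) - 1) * rpow u a.
Proof.
  intros Ha Hu0 HK.
  assert (Hlam1 := exp_ratio_gt_1 Ha).
  set (lam := exp (l / a) * exp (- l)) in *.
  assert (Hlam : lam = exp (l / a - l)) by (unfold lam; rewrite <- exp_plus; f_equal; ring).
  apply Rle_trans with (sum_f_R0 (fun j => lam ^ j * (u * exp (l / a) * p)) K).
  { apply sum_Rle; intros; apply dev_weight_le_lin. }
  rewrite <- scal_sum, tech3 by lra.
  (* [u lam^(K+1) <= u^a] because [u exp(l/a)^(K+1) <= 1] and [a < 1]. *)
  assert (Hkey : u * lam ^ S K <= rpow u a).
  { rewrite rpow_exp, Hlam, exp_pow by exact Hu0.
    rewrite <- (exp_ln u) at 1 by exact Hu0; rewrite <- exp_plus.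
    apply exp_le_compat; rewrite S_INR.
    assert (Hla : (INR K + 1) * l = a * ((INR K + 1) * (l / a))) by (field; lra).
    nra. }
  assert (0 < exp (l / a)) by apply exp_pos.
  replace (u * exp (l / a) * p * ((1 - lam ^ S K) / (1 - lam)))
    with (exp (l / a) * p / (lam - 1) * (u * lam ^ S K - u)) by (field; lra).
  apply Rmult_le_compat_l; [apply Rmult_le_pos; [nra | left; apply Rinv_0_lt_compat; lra] | lra].
Qed.

Lemma Series_dev_weight_tail_le (K : nat) :
  0 < a -> 0 < u -> p = 1 - exp (- l) -> - ln u < (INR K + 2) * (l / a) ->
  Series (fun i => dev_weight l a p u (S K + i)) <= exp l * rpow u a.
Proof.
  intros Ha Hu0 Hpq HK.
  assert (Hq := exp_neg_bounds).
  apply Rle_trans with (Series (fun i => exp (- l) ^ i * (exp (- l) ^ S K * p))).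
  { apply Series_le; [|apply ex_series_geom_scal; lra].
    intro i; split; [apply dev_weight_ge_0|].
    apply Rle_trans with (1 := dev_weight_le_geom _); right; rewrite pow_add; ring. }
  rewrite Series_geom_scal, rpow_exp, exp_pow, <- exp_plus by (exact Hu0 || lra).
  replace (exp (INR (S K) * - l) * p / (1 - exp (- l))) with (exp (INR (S K) * - l))
    by (rewrite Hpq; field; lra).
  apply exp_le_compat; rewrite S_INR.
  assert (Hla : (INR K + 2) * l = a * ((INR K + 2) * (l / a))) by (field; lra).
  nra.
Qed.

Lemma Series_dev_weight_le_rpow :
  0 < a < 1 -> p = 1 - exp (- l) ->
  Series (dev_weight l a p u)
  <= (exp (l / a) * p / (exp (l / a) * exp (- l) - 1) + exp l) * rpow u a.
Proof.
  intros Ha Hpq.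
  assert (Hq := exp_neg_bounds).
  destruct Hu as [Hu0 | Hu0].
  2:{ apply Rle_trans with (Series (fun j => exp (- l) ^ j * 0)).
      - apply Series_le; [|apply ex_series_geom_scal; lra].
        intro j; split; [apply dev_weight_ge_0|].
        unfold dev_weight; rewrite <- Hu0, Rmult_0_l; unfold Rmin; destruct Rle_dec; lra.
      - rewrite Series_geom_scal, <- Hu0 by lra; unfold rpow; destruct Req_EM_T; lra. }
  assert (Hrpow : 0 < rpow u a) by (rewrite rpow_exp by exact Hu0; apply exp_pos).
  destruct (Rle_or_lt (ln u + l / a) 0) as [Hsmall | Hlarge].
  - destruct (exists_split_index (l / a) (- ln u)) as [K [HK1 HK2]];
      [apply Rdiv_lt_0_compat; lra | lra |].
    rewrite (Series_incr_n _ (S K)) by (lia || apply ex_series_dev_weight; lra); simpl pred.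
    rewrite Rmult_plus_distr_r.
    apply Rplus_le_compat; [apply sum_dev_weight_head_le | apply Series_dev_weight_tail_le]; lra.
  - (* For [u exp(l/a) > 1] the crude bound [sum_j exp(-l)^j p = 1] suffices, as [u^a > exp(-l)]. *)
    apply Rle_trans with (Series (fun j => exp (- l) ^ j * p)).
    { apply Series_le; [|apply ex_series_geom_scal; lra].
      intro j; split; [apply dev_weight_ge_0 | apply dev_weight_le_geom]. }
    rewrite Series_geom_scal by lra.
    replace (p / (1 - exp (- l))) with 1 by (rewrite Hpq; field; lra).
    assert (Hlam := exp_ratio_gt_1 Ha).
    assert (0 <= exp (l / a) * p / (exp (l / a) * exp (- l) - 1)).
    { apply Rmult_le_pos; [apply Rmult_le_pos; [apply Rlt_le, exp_pos | lra] |].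
      left; apply Rinv_0_lt_compat; lra. }
    assert (1 <= exp l * rpow u a).
    { rewrite rpow_exp, <- exp_plus, <- exp_0 by exact Hu0; apply exp_le_compat.
      assert (Hla : l = a * (l / a)) by (field; lra). nra. }
    nra.
Qed.

End DevWeight.

Lemma Cmod_cis (x : R) : Cmod (cis x) = 1.
Proof.
  unfold Cmod, cis; simpl; rewrite !Rmult_1_r, <- sqrt_1; f_equal.
  rewrite <- (sin2_cos2 x); unfold Rsqr; ring.
Qed.

Lemma Cmod_cis_sub_1 (y : R) : Cmod (Cminus (cis y) (RtoC 1)) <= 2 * Rmin 1 (Rabs y).
Proof.
  assert (Hbounded : Cmod (Cminus (cis y) (RtoC 1)) <= 2).
  { unfold Cminus; apply Rle_trans with (1 := Cmod_triangle _ _).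
    rewrite Cmod_opp, Cmod_cis, Cmod_1; lra. }
  assert (Hlin : Cmod (Cminus (cis y) (RtoC 1)) <= 2 * Rabs y).
  { replace (RtoC 1) with (cis_taylor 1 y) by (apply injective_projections; simpl; field).
    rewrite <- (pow_1 (Rabs y)); apply cis_taylor_rem_bound. }
  unfold Rmin; destruct Rle_dec; lra.
Qed.

Lemma ln_rr_gt_0 (p : R) : 0 < p < 1 -> 0 < ln (rr p).
Proof. intro Hp; rewrite <- ln_1; apply ln_increasing; generalize (rr_gt_1 p Hp); lra. Qed.

Lemma qq_exp_ln_rr (p : R) : 0 < p < 1 -> exp (- ln (rr p)) = qq p.
Proof.
  intro Hp; unfold rr; rewrite ln_Rinv, Ropp_involutive, exp_ln;
    generalize (qq_bounds p Hp); lra.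
Qed.

Lemma f_ap_sub_1 (alpha p s : R) : 0 < p < 1 ->
  Cminus (f_ap alpha p s) (RtoC 1) =
  CSeries (fun j => Cmult (Cminus (cis (s * Rpower (rr p) (INR (S j) / alpha))) (RtoC 1))
                          (RtoC (qq p ^ j * p))).
Proof.
  intro Hp; assert (Hq := qq_bounds p Hp).
  set (a := fun j : nat => Cmult (cis (s * Rpower (rr p) (INR (S j) / alpha)))
                                 (RtoC (qq p ^ (S j - 1) * p))).
  assert (Hgeom : ex_series (fun j => qq p ^ j * p)) by (apply ex_series_geom_scal; lra).
  assert (Hre : ex_series (fun j => fst (a j))).
  { apply (ex_series_le (K := R_AbsRing) (V := R_CompleteNormedModule))
      with (fun j => qq p ^ j * p); [|exact Hgeom].
    intro j; change (Rabs (fst (a j)) <= qq p ^ j * p).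
    apply Rle_trans with (1 := re_le_Cmod (a j)); unfold a.
    rewrite Cmod_mult, Cmod_cis, Cmod_R, Rabs_pos_eq, Nat.sub_succ, Nat.sub_0_r; [lra|].
    apply Rmult_le_pos; [apply pow_le|]; lra. }
  unfold f_ap, CSeries; fold a.
  apply injective_projections; cbn [fst snd Cminus Cplus Copp RtoC].
  - symmetry; rewrite (Series_ext _ (fun j => fst (a j) - qq p ^ j * p)).
    + rewrite Series_minus, Series_geom_scal by (auto || lra).
      replace (p / (1 - qq p)) with 1 by (unfold qq; field; lra); unfold Rminus, a; reflexivity.
    + intro j; unfold a; simpl; rewrite Nat.sub_0_r; ring.
  - rewrite Ropp_0, Rplus_0_r; apply Series_ext.
    intro j; unfold a; simpl; rewrite Nat.sub_0_r; ring.
Qed.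

Lemma Cmod_f_ap_sub_1_le (alpha p s : R) : alpha <> 0 -> 0 < p < 1 ->
  Cmod (Cminus (f_ap alpha p s) (RtoC 1))
  <= 4 * Series (dev_weight (ln (rr p)) alpha p (Rabs s)).
Proof.
  intros Halpha Hp; assert (Hq := qq_bounds p Hp).
  assert (Hl := ln_rr_gt_0 p Hp).
  rewrite f_ap_sub_1 by exact Hp.
  replace 4 with (2 * 2) by ring; rewrite Rmult_assoc, <- Series_scal_l.
  apply Cmod_CSeries_le.
  2:{ apply (ex_series_scal_l (K := R_AbsRing) (V := R_NormedModule)), ex_series_dev_weight;
        lra || apply Rabs_pos. }
  intro j; unfold dev_weight; rewrite qq_exp_ln_rr by exact Hp.
  rewrite Cmod_mult, Cmod_R, Rabs_pos_eq by (apply Rmult_le_pos; [apply pow_le|]; lra).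
  rewrite <- (Rmult_assoc 2); apply Rmult_le_compat_r; [apply Rmult_le_pos; [apply pow_le|]; lra|].
  apply Rle_trans with (1 := Cmod_cis_sub_1 _); right; do 3 f_equal.
  rewrite Rabs_mult, (Rabs_pos_eq (Rpower _ _)) by apply Rlt_le, exp_pos.
  rewrite exp_pow; unfold Rpower; f_equal; f_equal; field; exact Halpha.
Qed.

Lemma Cmod_f_ap_sub_1_rpow (alpha p : R) : 0 < alpha < 1 -> 0 < p < 1 ->
  exists K : R, 0 < K /\
    forall s, Cmod (Cminus (f_ap alpha p s) (RtoC 1)) <= K * rpow (Rabs s) alpha.
Proof.
  intros Halpha Hp; set (l := ln (rr p)).
  assert (Hl : 0 < l) by apply ln_rr_gt_0, Hp.
  assert (Hlam := exp_ratio_gt_1 l alpha Hl Halpha).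
  exists (4 * (exp (l / alpha) * p / (exp (l / alpha) * exp (- l) - 1) + exp l)); split.
  { assert (0 < exp (l / alpha) * p / (exp (l / alpha) * exp (- l) - 1)).
    { apply Rdiv_lt_0_compat; [apply Rmult_lt_0_compat; [apply exp_pos | lra] | lra]. }
    generalize (exp_pos l); lra. }
  intro s; apply Rle_trans with (1 := Cmod_f_ap_sub_1_le alpha p s ltac:(lra) Hp).
  rewrite Rmult_assoc; apply Rmult_le_compat_l; [lra|].
  apply Series_dev_weight_le_rpow; try lra; [apply Rabs_pos|].
  unfold l; rewrite qq_exp_ln_rr by exact Hp; unfold qq; ring.
Qed.

Lemma Cmod_f_ap_sub_1_lin (alpha p : R) : 1 < alpha -> 0 < p < 1 ->
  exists K : R, 0 < K /\
    forall s, Cmod (Cminus (f_ap alpha p s) (RtoC 1)) <= K * Rabs s.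
Proof.
  intros Halpha Hp; set (l := ln (rr p)).
  assert (Hl : 0 < l) by apply ln_rr_gt_0, Hp.
  assert (Hlam := exp_ratio_lt_1 l alpha Hl Halpha).
  exists (4 * (exp (l / alpha) * p / (1 - exp (l / alpha) * exp (- l)))); split.
  { apply Rmult_lt_0_compat; [lra|].
    apply Rdiv_lt_0_compat; [apply Rmult_lt_0_compat; [apply exp_pos | lra] | lra]. }
  intro s; apply Rle_trans with (1 := Cmod_f_ap_sub_1_le alpha p s ltac:(lra) Hp).
  rewrite Rmult_assoc; apply Rmult_le_compat_l; [lra|].
  apply Series_dev_weight_le_lin; lra || apply Rabs_pos.
Qed.

Lemma Cmod_x_n (alpha p : R) (n : nat) (t : R) :
  Cmod (x_n alpha p n t) =
  INR n * Cmod (Cminus (f_ap alpha p (t / Rpower (INR n) (1 / alpha))) (RtoC 1)).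
Proof. unfold x_n; rewrite Cmod_mult, Cmod_R, Rabs_pos_eq by apply pos_INR; reflexivity. Qed.

Lemma Rabs_div_Rpower (t x c : R) : Rabs (t / Rpower x c) = Rabs t / Rpower x c.
Proof.
  rewrite Rabs_div, (Rabs_pos_eq (Rpower _ _));
    [reflexivity | apply Rlt_le, exp_pos | apply Rgt_not_eq, exp_pos].
Qed.

Lemma rpow_scale (alpha t : R) (n : nat) : 0 < alpha -> (1 <= n)%nat ->
  INR n * rpow (Rabs (t / Rpower (INR n) (1 / alpha))) alpha = rpow (Rabs t) alpha.
Proof.
  intros Halpha Hn; assert (HnR : 0 < INR n) by (apply lt_0_INR; lia).
  rewrite Rabs_div_Rpower.
  destruct (Req_dec (Rabs t) 0) as [Ht | Ht].
  - rewrite Ht; unfold Rdiv; rewrite Rmult_0_l; unfold rpow; destruct Req_EM_T; [ring | lra].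
  - assert (Ht' : 0 < Rabs t) by (generalize (Rabs_pos t); lra).
    rewrite !rpow_exp by (try apply Rdiv_lt_0_compat; try apply exp_pos; lra).
    unfold Rdiv; rewrite ln_mult, ln_Rinv, ln_Rpower
      by (try apply Rinv_0_lt_compat; apply exp_pos || lra).
    replace (alpha * (ln (Rabs t) + - (1 * / alpha * ln (INR n))))
      with (- ln (INR n) + alpha * ln (Rabs t)) by (field; lra).
    rewrite exp_plus, exp_Ropp, exp_ln by lra; field; lra.
Qed.

Lemma x_n_bound_lt_1 (alpha p : R) : 0 < alpha < 1 -> 0 < p < 1 ->
  exists C2 C3 : R, 0 < C2 /\ 0 < C3 /\
    forall (n : nat) (t : R), (1 <= n)%nat ->
      Rabs t <= C2 * Rpower (INR n) (1 / alpha) ->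
      Cmod (x_n alpha p n t) / INR n <= 1 / 2 /\
      Cmod (x_n alpha p n t) <= C3 * rpow (Rabs t) alpha.
Proof.
  intros Halpha Hp; destruct (Cmod_f_ap_sub_1_rpow alpha p Halpha Hp) as [K [HK Hf]].
  exists (Rpower (/ (2 * K)) (1 / alpha)), K; split; [apply exp_pos | split; [exact HK|]].
  intros n t Hn Ht; assert (HnR : 0 < INR n) by (apply lt_0_INR; lia).
  set (s := t / Rpower (INR n) (1 / alpha)).
  assert (Hs : Rabs s <= Rpower (/ (2 * K)) (1 / alpha)).
  { unfold s; rewrite Rabs_div_Rpower; apply Rle_div_l; [apply exp_pos | exact Ht]. }
  assert (Hrs : rpow (Rabs s) alpha <= / (2 * K)).
  { unfold rpow; destruct Req_EM_T as [_ | Hs0]; [left; apply Rinv_0_lt_compat; lra|].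
    rewrite <- (Rpower_1 (/ (2 * K))) by (apply Rinv_0_lt_compat; lra).
    replace (Rpower (/ (2 * K)) 1) with (Rpower (Rpower (/ (2 * K)) (1 / alpha)) alpha)
      by (rewrite Rpower_mult; f_equal; field; lra).
    apply Rle_Rpower_l; [lra|].
    split; [generalize (Rabs_pos s); lra | exact Hs]. }
  rewrite Cmod_x_n; fold s; split.
  - replace (INR n * Cmod (Cminus (f_ap alpha p s) 1) / INR n)
      with (Cmod (Cminus (f_ap alpha p s) 1)) by (field; lra).
    apply Rle_trans with (1 := Hf s).
    apply Rle_trans with (K * / (2 * K)); [apply Rmult_le_compat_l; lra | right; field; lra].
  - rewrite <- (rpow_scale alpha t n) by (lra || exact Hn); fold s.
    apply Rle_trans with (INR n * (K * rpow (Rabs s) alpha));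
      [apply Rmult_le_compat_l; [lra | apply Hf]|].
    right; ring.
Qed.

Lemma x_n_bound_gt_1 (alpha p : R) : 1 < alpha -> 0 < p < 1 ->
  exists C2 C3 : R, 0 < C2 /\ 0 < C3 /\
    forall (n : nat) (t : R), (1 <= n)%nat ->
      Rabs t <= C2 * Rpower (INR n) (1 / alpha) ->
      Cmod (x_n alpha p n t) / INR n <= 1 / 2 /\
      Cmod (x_n alpha p n t) <= C3 * Rabs t * Rpower (INR n) ((alpha - 1) / alpha).
Proof.
  intros Halpha Hp; destruct (Cmod_f_ap_sub_1_lin alpha p Halpha Hp) as [K [HK Hf]].
  exists (/ (2 * K)), K; split; [apply Rinv_0_lt_compat; lra | split; [exact HK|]].
  intros n t Hn Ht; assert (HnR : 0 < INR n) by (apply lt_0_INR; lia).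
  set (s := t / Rpower (INR n) (1 / alpha)).
  assert (Hs : Rabs s = Rabs t / Rpower (INR n) (1 / alpha)) by apply Rabs_div_Rpower.
  rewrite Cmod_x_n; fold s; split.
  - replace (INR n * Cmod (Cminus (f_ap alpha p s) 1) / INR n)
      with (Cmod (Cminus (f_ap alpha p s) 1)) by (field; lra).
    apply Rle_trans with (1 := Hf s).
    assert (Rabs s <= / (2 * K)) by (rewrite Hs; apply Rle_div_l; [apply exp_pos | exact Ht]).
    apply Rle_trans with (K * / (2 * K)); [apply Rmult_le_compat_l; lra | right; field; lra].
  - apply Rle_trans with (INR n * (K * Rabs s)); [apply Rmult_le_compat_l; [lra | apply Hf]|].
    assert (Hsplit : Rpower (INR n) ((alpha - 1) / alpha) * Rpower (INR n) (1 / alpha) = INR n).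
    { rewrite <- Rpower_plus; replace ((alpha - 1) / alpha + 1 / alpha) with 1 by (field; lra).
      apply Rpower_1, HnR. }
    rewrite Hs, <- Hsplit at 1; right; field; apply Rgt_not_eq, exp_pos.
Qed.

Theorem lemma3 :
  (forall (k : nat) (alpha p : R),
      (2 <= k)%nat -> ((0 < alpha < 1) \/ (1 < alpha < 2)) -> 0 < p < 1 ->
      exists C1 : R, 0 < C1 /\
        forall (n : nat) (t : R), (1 <= n)%nat ->
          Cmod (R_n1k alpha p n k t)
            <= C1 * Rabs t ^ k / Rpower (INR n) ((INR k - alpha) / alpha))
  /\
  (forall alpha p : R,
      ((0 < alpha < 1) \/ (1 < alpha < 2)) -> 0 < p < 1 ->
      exists C2 C3 : R, 0 < C2 /\ 0 < C3 /\
        forall (n : nat) (t : R), (1 <= n)%nat ->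
          Rabs t <= C2 * Rpower (INR n) (1 / alpha) ->
          Cmod (x_n alpha p n t) / INR n <= 1 / 2 /\
          (0 < alpha < 1 -> Cmod (x_n alpha p n t) <= C3 * rpow (Rabs t) alpha) /\
          (1 < alpha < 2 ->
             Cmod (x_n alpha p n t) <= C3 * Rabs t * Rpower (INR n) ((alpha - 1) / alpha))).
Proof.
  split.
  - intros k alpha p Hk Halpha Hp; apply R_n1k_bound; [|exact Hp].
    apply le_INR in Hk; simpl in Hk; lra.
  - intros alpha p [Halpha | Halpha] Hp.
    + destruct (x_n_bound_lt_1 alpha p Halpha Hp) as (C2 & C3 & HC2 & HC3 & Hx).
      exists C2, C3; do 2 (split; [assumption|]); intros n t Hn Ht.
      destruct (Hx n t Hn Ht); repeat split; auto; lra.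
    + destruct (x_n_bound_gt_1 alpha p (proj1 Halpha) Hp) as (C2 & C3 & HC2 & HC3 & Hx).
      exists C2, C3; do 2 (split; [assumption|]); intros n t Hn Ht.
      destruct (Hx n t Hn Ht); repeat split; auto; lra.
Qed.
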